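(* Under the setting of the context (with $\boldsymbol{Z}_a=[\boldsymbol{Z}_r\ \boldsymbol{Z}_u]$ of full column rank, $N_u\le N_r$, and arbitrary $\boldsymbol{w}_{\mathrm{init}}$, $\boldsymbol{y}_r$, $\boldsymbol{y}_u$), let $\boldsymbol{Z}_{r,\mathrm{sub}}\in\mathbb{R}^{D\times N_u}$ consist of $N_u$ columns of $\boldsymbol{Z}_r$ and $\boldsymbol{y}_{r,\mathrm{sub}}\in\mathbb{R}^{N_u}$ the corresponding entries of $\boldsymbol{y}_r$. Fix $c\in(0,1)$, set $\tilde{\boldsymbol{Z}}_u=(1-c)\boldsymbol{Z}_{r,\mathrm{sub}}+c\boldsymbol{Z}_u$, $\tilde{\boldsymbol{Z}}_a=[\boldsymbol{Z}_r\ \tilde{\boldsymbol{Z}}_u]$, $\tilde{\boldsymbol{y}}_a=[\boldsymbol{y}_r;\boldsymbol{y}_{r,\mathrm{sub}}]$, and define the unlearned model $\boldsymbol{w}_u=\boldsymbol{w}_p+\tilde{\boldsymbol{Z}}_a(\tilde{\boldsymbol{Z}}_a^\top\tilde{\boldsymbol{Z}}_a)^{-1}(\tilde{\boldsymbol{y}}_a-\tilde{\boldsymbol{Z}}_a^\top\boldsymbol{w}_p)$. Then $\tilde{\boldsymbol{Z}}_a^\top\tilde{\boldsymbol{Z}}_a$ is invertible and $$\boldsymbol{w}_r-\boldsymbol{w}_u=(\boldsymbol{I}_D-\boldsymbol{\Pi}_r)\boldsymbol{Z}_u\boldsymbol{M}\Big(\boldsymbol{K}_{ur}\boldsymbol{K}_{rr}^{-1}(\boldsymbol{y}_r-\boldsymbol{Z}_r^\top\boldsymbol{w}_{\mathrm{init}})+\boldsymbol{Z}_u^\top\boldsymbol{w}_{\mathrm{init}}-\boldsymbol{y}_{r,\mathrm{sub}}\Big);$$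 in particular $\boldsymbol{w}_r-\boldsymbol{w}_u$ does not depend on $c$.
   Context: Setting (over-parameterized linear model trained to interpolation / minimum-distance solutions). Given $\boldsymbol{Z}_r\in\mathbb{R}^{D\times N_r}$ (features of remaining data), $\boldsymbol{Z}_u\in\mathbb{R}^{D\times N_u}$ (features of forgetting data), with $\boldsymbol{Z}_a=[\boldsymbol{Z}_r\ \boldsymbol{Z}_u]$ of full column rank. Write $\boldsymbol{y}_a=[\boldsymbol{y}_r;\boldsymbol{y}_u]\in\mathbb{R}^{N_r+N_u}$ (original labels), $\boldsymbol{w}_{\mathrm{init}}\in\mathbb{R}^D$. Define $\boldsymbol{w}_p=\boldsymbol{w}_{\mathrm{init}}+\boldsymbol{Z}_a(\boldsymbol{Z}_a^\top\boldsymbol{Z}_a)^{-1}(\boldsymbol{y}_a-\boldsymbol{Z}_a^\top\boldsymbol{w}_{\mathrm{init}})$ (pre-trained model), $\boldsymbol{w}_r=\boldsymbol{w}_{\mathrm{init}}+\boldsymbol{Z}_r(\boldsymbol{Z}_r^\top\boldsymbol{Z}_r)^{-1}(\boldsymbol{y}_r-\boldsymbol{Z}_r^\top\boldsymbol{w}_{\mathrm{init}})$ (retrained model). Let $\boldsymbol{K}_{rr}=\boldsymbol{Z}_r^\top\boldsymbol{Z}_r$, $\boldsymbol{K}_{ru}=\boldsymbol{Z}_r^\top\boldsymbol{Z}_u$, $\boldsymbol{K}_{ur}=\boldsymbol{Z}_u^\top\boldsymbol{Z}_r$, $\boldsymbol{K}_{uu}=\boldsymbol{Z}_u^\top\boldsymbol{Z}_u$,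 $\boldsymbol{M}=(\boldsymbol{K}_{uu}-\boldsymbol{K}_{ur}\boldsymbol{K}_{rr}^{-1}\boldsymbol{K}_{ru})^{-1}$ (inverse of the Schur complement), and $\boldsymbol{\Pi}_r=\boldsymbol{Z}_r(\boldsymbol{Z}_r^\top\boldsymbol{Z}_r)^{-1}\boldsymbol{Z}_r^\top$. $\boldsymbol{I}_D$ is the $D\times D$ identity. *)

From mathcomp Require Import all_boot all_order all_algebra.
Set Implicit Arguments. Unset Strict Implicit. Unset Printing Implicit Defensive.
Import GRing.Theory Num.Theory.
Local Open Scope ring_scope.

Definition mdsol (R : fieldType) (D N : nat)
  (Z : 'M[R]_(D, N)) (y : 'cV[R]_N) (w0 : 'cV[R]_D) : 'cV[R]_D :=
  w0 + Z *m invmx (Z^T *m Z) *m (y - Z^T *m w0).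

From mathcomp Require Import all_boot all_order all_algebra.
Import GRing.Theory Num.Theory.
Local Open Scope ring_scope.

(* With E the column selector, Z~_a = Z_a T for T = [[1, (1-c) E], [0, c]],
   which is invertible as soon as c <> 0, and T^T fixes y~_a = [y_r; y_r,sub].
   Minimum-distance solutions only see the column space of Z and the
   constraints Z^T w = y, both invariant under such a T, and restarting from w_p
   stays in the affine space w_init + range Z_a.  Hence w_u is the
   minimum-distance solution of Z_a with labels y~_a, independently of c, and
   block elimination with the Schur complement of the Gram matrix expresses it
   as an update of w_r. *)

Section MinimumDistance.
Context {R : realFieldType}.

Lemma full_col_rank_mulmx_eq0 {D N} {Z : 'M[R]_(D, N)} :
  \rank Z = N -> forall x : 'cV_N, Z *m x = 0 -> x = 0.
Proof.
move=> rankZ x Zx0; have freeZt : row_free Z^T by rewrite /row_free mxrank_tr rankZ.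
apply: trmx_inj; rewrite trmx0; apply/eqP.
by rewrite -(mulmx_free_eq0 _ freeZt) -trmx_mul Zx0 trmx0.
Qed.

Lemma tr_mulmx_self_eq0 n (x : 'cV[R]_n) : x^T *m x = 0 -> x = 0.
Proof.
move=> /(congr1 (fun a : 'M_1 => a 0 0)); rewrite !mxE.
under eq_bigr do rewrite mxE -expr2.
move=> /psumr_eq0P sq_eq0; apply/matrixP => i j; rewrite ord1 mxE.
by apply/eqP; rewrite -sqrf_eq0 sq_eq0 // => k _; apply: sqr_ge0.
Qed.

Lemma gram_unitmx {D N} {Z : 'M[R]_(D, N)} :
  (forall x : 'cV_N, Z *m x = 0 -> x = 0) -> Z^T *m Z \in unitmx.
Proof.
move=> Z_inj; rewrite -row_free_unit -kermx_eq0.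
apply/rowV0P => v /sub_kermxP vG0.
have Zv0 : Z *m v^T = 0.
  by apply: tr_mulmx_self_eq0; rewrite trmx_mul trmxK mulmxA -(mulmxA v) vG0 mul0mx.
by rewrite -[v]trmxK (Z_inj _ Zv0) trmx0.
Qed.

Lemma gram_mulmxr_unitmx {D N} (Z : 'M[R]_(D, N)) (T : 'M_N) :
  Z^T *m Z \in unitmx -> T \in unitmx -> (Z *m T)^T *m (Z *m T) \in unitmx.
Proof.
by move=> GZ uT; rewrite trmx_mul -mulmxA (mulmxA Z^T) !unitmx_mul unitmx_tr uT GZ.
Qed.

Lemma mdsol_interp {D N} (Z : 'M[R]_(D, N)) y w :
  Z^T *m Z \in unitmx -> Z^T *m mdsol Z y w = y.
Proof. by move=> GZ; rewrite mulmxDr !mulmxA mulmxV // mul1mx addrC subrK. Qed.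

Lemma mdsol_unique {D N} (Z : 'M[R]_(D, N)) y w a :
  Z^T *m Z \in unitmx -> Z^T *m (w + Z *m a) = y -> mdsol Z y w = w + Z *m a.
Proof.
move=> GZ <-; rewrite /mdsol mulmxDr addrAC subrr add0r.
by rewrite -!mulmxA (mulmxA Z^T) mulKmx.
Qed.

Lemma mdsol_shift {D N} (Z : 'M[R]_(D, N)) y w a :
  Z^T *m Z \in unitmx -> mdsol Z y (w + Z *m a) = mdsol Z y w.
Proof.
move=> GZ; rewrite /mdsol (mulmxDr Z^T) opprD addrA mulmxBr (mulmxA Z^T Z).
by rewrite -!(mulmxA Z) mulKmx // addrC -!addrA (addrC (Z *m a)) subrK.
Qed.

Lemma mdsol_restart {D N} (Z : 'M[R]_(D, N)) y y' w :
  Z^T *m Z \in unitmx -> mdsol Z y (mdsol Z y' w) = mdsol Z y w.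
Proof. by move=> GZ; rewrite [mdsol Z y' w]/mdsol -mulmxA mdsol_shift. Qed.

Lemma mdsol_mulmxr {D N} (Z : 'M[R]_(D, N)) (T : 'M_N) y w :
  Z^T *m Z \in unitmx -> T \in unitmx ->
  mdsol (Z *m T) (T^T *m y) w = mdsol Z y w.
Proof.
move=> GZ uT; set a := invmx (Z^T *m Z) *m (y - Z^T *m w).
have vE : mdsol Z y w = w + Z *m T *m (invmx T *m a) by rewrite -mulmxA mulKVmx // mulmxA.
rewrite vE; apply: mdsol_unique; first exact: gram_mulmxr_unitmx.
by rewrite -vE trmx_mul -mulmxA mdsol_interp.
Qed.

Section BlockUpdate.
Variables (D n m : nat) (A : 'M[R]_(D, n)) (B : 'M[R]_(D, m)).
Hypothesis AB_inj : forall x : 'cV_(n + m), row_mx A B *m x = 0 -> x = 0.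

(* [Bres] is (I - Pi_A) B and [S] the Schur complement of [K] in the Gram
   matrix of [row_mx A B]. *)
Let K := A^T *m A.
Let Bres := B - A *m invmx K *m (A^T *m B).
Let S := B^T *m B - B^T *m A *m invmx K *m (A^T *m B).

Lemma gram_lsub_unitmx : K \in unitmx.
Proof.
apply: gram_unitmx => x Ax0; have /AB_inj/eqP : row_mx A B *m col_mx x 0 = 0.
  by rewrite mul_row_col Ax0 mulmx0 addr0.
by rewrite col_mx_eq0 => /andP[/eqP].
Qed.

Lemma tr_mulmx_residual : A^T *m Bres = 0.
Proof. by rewrite /Bres mulmxBr !mulmxA mulmxV ?gram_lsub_unitmx // mul1mx subrr. Qed.

Lemma residualE : Bres = row_mx A B *m col_mx (- (invmx K *m (A^T *m B))) 1%:M.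
Proof. by rewrite /Bres mul_row_col mulmx1 mulmxN !mulmxA addrC. Qed.

Lemma schur_complementE : B^T *m Bres = S.
Proof. by rewrite /Bres /S mulmxBr !mulmxA. Qed.

Lemma schur_gramE : S = Bres^T *m Bres.
Proof.
have -> : Bres^T = B^T - (A *m invmx K *m (A^T *m B))^T by rewrite /Bres linearB.
rewrite -schur_complementE mulmxBl [X in _ - X](_ : _ = 0) ?subr0 //.
by rewrite !trmx_mul -!mulmxA tr_mulmx_residual !mulmx0.
Qed.

Lemma schur_unitmx : S \in unitmx.
Proof.
rewrite schur_gramE; apply: gram_unitmx => x; rewrite residualE -mulmxA.
by move/AB_inj/eqP; rewrite mul_col_mx mul1mx col_mx_eq0 => /andP[_ /eqP].
Qed.

Lemma mdsol_row_mx y1 y2 w (wA := mdsol A y1 w) :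
  mdsol (row_mx A B) (col_mx y1 y2) w =
  wA - Bres *m invmx S *m (B^T *m wA - y2).
Proof.
have GK := gram_lsub_unitmx; have GS := schur_unitmx.
set e := B^T *m wA - y2.
pose a := col_mx (invmx K *m (y1 - A^T *m w)) 0 -
  col_mx (- (invmx K *m (A^T *m B))) 1%:M *m invmx S *m e.
have vE : w + row_mx A B *m a = wA - Bres *m invmx S *m e.
  rewrite /wA /mdsol residualE /a (mulmxBr (row_mx A B)) (mul_row_col A B _ 0).
  by rewrite mulmx0 addr0 addrA -!mulmxA.
rewrite (mdsol_unique _ _ _ a) ?vE //; first exact: gram_unitmx.
rewrite tr_row_mx mul_col_mx !mulmxBr !mulmxA tr_mulmx_residual schur_complementE.
by rewrite mulmxV // /wA mdsol_interp // !mul0mx !mul1mx subrr subr0 subKr.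
Qed.

End BlockUpdate.

End MinimumDistance.

Theorem mainTheorem4 (R : realFieldType) (D Nr Nu : nat)
  (Zr : 'M[R]_(D, Nr)) (Zu : 'M[R]_(D, Nu))
  (yr : 'cV[R]_Nr) (yu : 'cV[R]_Nu) (winit : 'cV[R]_D)
  (s : 'I_Nu -> 'I_Nr) (c : R) :
  \rank (row_mx Zr Zu) = (Nr + Nu)%N ->
  (Nu <= Nr)%N ->
  injective s ->
  0 < c < 1 ->
  let Za := row_mx Zr Zu in
  let ya := col_mx yr yu in
  let wp := mdsol Za ya winit in
  let wr := mdsol Zr yr winit in
  let Krr := Zr^T *m Zr in
  let Kru := Zr^T *m Zu in
  let Kur := Zu^T *m Zr in
  let Kuu := Zu^T *m Zu in
  let M := invmx (Kuu - Kur *m invmx Krr *m Kru) in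
  let Pir := Zr *m invmx Krr *m Zr^T in
  let Zrsub := colsub s Zr in
  let yrsub := rowsub s yr in
  let tZu := (1 - c) *: Zrsub + c *: Zu in
  let tZa := row_mx Zr tZu in
  let tya := col_mx yr yrsub in
  let wu := mdsol tZa tya wp in
  (tZa^T *m tZa \in unitmx) /\
  wr - wu = (1%:M - Pir) *m Zu *m M *m
            (Kur *m invmx Krr *m (yr - Zr^T *m winit) + Zu^T *m winit - yrsub).
Proof.
move=> rankZa _ _ /andP[c_gt0 _] Za ya wp wr Krr Kru Kur Kuu M Pir Zrsub yrsub tZu tZa tya wu.
have Za_inj := full_col_rank_mulmx_eq0 rankZa.
have GZa := gram_unitmx Za_inj.
pose T : 'M[R]_(Nr + Nu) := block_mx 1%:M ((1 - c) *: colsub s 1%:M) 0 c%:M.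
have T_unit : T \in unitmx.
  by rewrite unitmxE det_ublock det1 det_scalar mul1r unitrX // unitfE lt0r_neq0.
have tZaE : tZa = Za *m T.
  by rewrite mul_row_block !mulmx1 mulmx0 addr0 mul_mx_scalar -scalemxAr mulmx_colsub mulmx1.
have tyaE : tya = T^T *m col_mx yr yrsub.
  rewrite tr_block_mx trmx1 trmx0 tr_scalar_mx mul_block_col mul1mx mul0mx addr0.
  rewrite linearZ /= -scalemxAl mul_scalar_mx trmx_mxsub trmx1 mul_rowsub_mx mul1mx.
  by rewrite -scalerDl subrK scale1r.
split; first by rewrite tZaE gram_mulmxr_unitmx.
have -> : wu = mdsol Za (col_mx yr yrsub) winit.
  by rewrite /wu tZaE tyaE mdsol_mulmxr // mdsol_restart.
rewrite mdsol_row_mx // -/wr subKr; congr (_ *m _ *m (_ - _)).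
  by rewrite mulmxBl mul1mx /Pir !mulmxA.
by rewrite /wr /mdsol mulmxDr !mulmxA addrC.
Qed.
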